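(* Let $s,t\geq 0$ and let $\{\varphi_n\}_{n\in\mathbb{N}}$ be a sequence of elements of $\mathcal{S}^{s}_{t}(\mathbb{R}^d)$. Then $\{\varphi_n\}$ converges in $\mathcal{S}^{s}_{t}(\mathbb{R}^d)$ if and only if $\{\varphi_n\}$ is bounded in $\mathcal{S}^{s}_{t}(\mathbb{R}^d)$ and it converges pointwise on $\mathbb{R}^d$.
   Context: For $s,t\geq 0$, the Gelfand-Shilov space $\mathcal{S}^{s}_{t}(\mathbb{R}^d)$ is the set of $\varphi\in\mathcal{S}(\mathbb{R}^d)$ for which there is $h>0$ with $p_h^{s,t}(\varphi)=\sup_{x\in\mathbb{R}^d,\alpha,\beta\in\mathbb{N}^d}\frac{h^{|\alpha+\beta|}}{\alpha!^{t}\beta!^{s}}|x^\alpha\partial^\beta\varphi(x)|<\infty$; it carries the inductive limit topology defined by these norms (as $h\to 0^+$). *)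

From HB Require Import structures.
From mathcomp Require Import all_boot all_order all_algebra.
From mathcomp Require Import all_classical all_reals.
From mathcomp Require Import exp.
From mathcomp Require Import complex.

Set Implicit Arguments.
Unset Strict Implicit.
Unset Printing Implicit Defensive.
Import Order.TTheory GRing.Theory Num.Theory.
Local Open Scope ring_scope.

Section GelfandShilov.
Variable R : realType.
Variable d : nat.

Local Notation C := (R[i]).
Local Notation pt := 'rV[R]_d.
Local Notation mindex := {ffun 'I_d -> nat}.

Definition cabs (z : C) : R := Normc.normc z.

Definition mzero : mindex := [ffun => 0%N].
Definition mincr (b : mindex) (j : 'I_d) : mindex := [ffun k => (b k + (k == j))%N].
Definition mlen (a : mindex) : nat := (\sum_k a k)%N.
Definition mfact (a : mindex) : R := (\prod_k (a k)`!)%:R.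
Definition xpow (x : pt) (a : mindex) : R := \prod_k (x 0 k) ^+ a k.

Definition unitv (j : 'I_d) : pt := delta_mx 0 j.

Definition is_partial (j : 'I_d) (f g : pt -> C) : Prop :=
  forall x : pt, forall e : R, 0 < e -> exists del : R, 0 < del /\
    forall h : R, h != 0 -> `|h| < del ->
      cabs ((f (x + h *: unitv j) - f x) * ((h^-1)%:C)%C - g x) < e.

Definition is_derivs (f : pt -> C) (D : mindex -> pt -> C) : Prop :=
  D mzero = f /\ forall (b : mindex) (j : 'I_d), is_partial j (D b) (D (mincr b j)).

Definition ptnorm (x : pt) : R := \big[Num.max/0]_k `|x 0 k|.

Definition ccontinuous (f : pt -> C) : Prop :=
  forall x : pt, forall e : R, 0 < e -> exists del : R, 0 < del /\
    forall y : pt, ptnorm (y - x) < del -> cabs (f y - f x) < e.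

Definition schwartz (f : pt -> C) : Prop :=
  exists D, is_derivs f D /\ (forall b, ccontinuous (D b)) /\
    forall a b : mindex, exists M : R, forall x : pt, `|xpow x a| * cabs (D b x) <= M.

(* M is an upper bound for the quantities in p_h^{s,t}(f), i.e. p_h^{s,t}(f) <= M *)
Definition pbound (s t h : R) (f : pt -> C) (M : R) : Prop :=
  exists D, is_derivs f D /\
    forall (x : pt) (a b : mindex),
      h ^+ (mlen a + mlen b) / ((mfact a) `^ t * (mfact b) `^ s)
        * (`|xpow x a| * cabs (D b x)) <= M.

Definition GS (s t : R) (f : pt -> C) : Prop :=
  schwartz f /\ exists h M : R, 0 < h /\ pbound s t h f M.

Definition p_lt (s t h : R) (f : pt -> C) (e : R) : Prop :=
  exists M : R, M < e /\ pbound s t h f M.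

(* Zero-neighbourhood base of the (locally convex) inductive limit topology
   of the normed spaces (S^s_{t,h}, p_h), h -> 0+: absolutely convex subsets U
   of S^s_t whose trace on every step space contains a p_h-ball. *)
Definition GS_nbhd0 (s t : R) (U : (pt -> C) -> Prop) : Prop :=
  (forall f, U f -> GS s t f) /\
  (forall (f g : pt -> C) (a b : C), U f -> U g -> cabs a + cabs b <= 1 ->
     U (fun x => a * f x + b * g x)) /\
  (forall h : R, 0 < h -> exists e : R, 0 < e /\
     forall f, GS s t f -> p_lt s t h f e -> U f).

Definition GS_cvg_to (s t : R) (phi : nat -> pt -> C) (f : pt -> C) : Prop :=
  GS s t f /\ forall U, GS_nbhd0 s t U ->
    exists N : nat, forall n : nat, (N <= n)%N -> U (fun x => phi n x - f x).

Definition GS_converges (s t : R) (phi : nat -> pt -> C) : Prop :=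
  exists f, GS_cvg_to s t phi f.

Definition GS_bounded (s t : R) (phi : nat -> pt -> C) : Prop :=
  forall U, GS_nbhd0 s t U ->
    exists lam : R, 0 < lam /\ forall n : nat, U (fun x => ((lam^-1)%:C)%C * phi n x).

Definition pointwise_converges (phi : nat -> pt -> C) : Prop :=
  forall x : pt, exists L : C, forall e : R, 0 < e ->
    exists N : nat, forall n : nat, (N <= n)%N -> cabs (phi n x - L) < e.

End GelfandShilov.

From mathcomp Require Import all_boot all_order all_algebra.
From mathcomp Require Import all_classical all_reals.
From mathcomp Require Import complex.
From mathcomp Require Import exp topology normedtype derive.
From mathcomp Require Import ring lra.
Import Order.TTheory GRing.Theory Num.Theory.
Import numFieldNormedType.Exports.
Local Open Scope ring_scope.
Set Implicit Arguments.
Unset Strict Implicit.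
Unset Printing Implicit Defensive.

(* Convergence in the inductive limit implies boundedness (a zero-neighbourhood
   absorbs each element and, being absolutely convex, the tail of the sequence) and
   pointwise convergence (evaluation at a point is continuous).

   Conversely, a bounded sequence is bounded in a single step space: otherwise the
   countably many weighted point evaluations witnessing unboundedness at the steps
   1/(k+1) define a zero-neighbourhood absorbing no multiple of the sequence.  With
   uniform bounds on every x^a d^b phi_n, a second-order Taylor estimate propagates
   pointwise convergence from phi_n to all its derivatives; the limits are the
   derivatives of a function phi obeying the same bounds.  Equicontinuity makes the
   convergence of x^a d^b phi_n uniform on cubes, one extra power of x makes it
   uniform outside, and the factor 2^-(|a|+|b|) of the step h/2 leaves only finitely
   many (a, b) to control: phi_n -> phi in p_{h/2}, hence in S^s_t. *)

Lemma ler_sum_term (R : numDomainType) (n : nat) (F : 'I_n -> R) (i : 'I_n) :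
  (forall j, 0 <= F j) -> F i <= \sum_j F j.
Proof. by move=> F0; rewrite (bigD1 i) //= lerDl sumr_ge0. Qed.

Section ComplexModulus.
Variable R : realType.
Local Notation C := (R[i]).
Implicit Types (z w u : C) (k : R).

Lemma cabs_ge0 z : 0 <= cabs z.
Proof. by case: z => a b; rewrite /cabs /Normc.normc sqrtr_ge0. Qed.

Lemma cabsD z w : cabs (z + w) <= cabs z + cabs w.
Proof. exact: le_normcD. Qed.

Lemma cabsM z w : cabs (z * w) = cabs z * cabs w.
Proof. exact: Normc.normcM. Qed.

Lemma cabsN z : cabs (- z) = cabs z.
Proof. exact: normcN. Qed.

Lemma cabs0 : cabs (0 : C) = 0.
Proof. exact: Normc.normc0. Qed.

Lemma cabs_eq0 z : cabs z = 0 -> z = 0.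
Proof. exact: Normc.eq0_normc. Qed.

Lemma cabsR k : cabs (k%:C)%C = `|k|.
Proof. by rewrite /cabs /Normc.normc /= expr0n /= addr0 sqrtr_sqr. Qed.

Lemma cabs_distC z w : cabs (z - w) = cabs (w - z).
Proof. by rewrite -cabsN opprB. Qed.

Lemma cabs_distD z w u : cabs (z - u) <= cabs (z - w) + cabs (w - u).
Proof. by have := cabsD (z - w) (w - u); rewrite addrA subrK. Qed.

Lemma cabsB z w : cabs (z - w) <= cabs z + cabs w.
Proof. by rewrite -(cabsN w); exact: cabsD. Qed.

Lemma cabs_sub_sub_add_le (z1 z2 z3 z4 : C) :
  cabs (z1 - z2 - z3 + z4) <= cabs z1 + cabs z2 + cabs z3 + cabs z4.
Proof.
apply: le_trans (cabsD _ _) _; rewrite lerD2r.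
by apply: le_trans (cabsB _ _) _; rewrite lerD2r cabsB.
Qed.

Lemma cabs_ge_Re z : `|complex.Re z| <= cabs z.
Proof.
case: z => a b; rewrite /cabs /Normc.normc /= -sqrtr_sqr.
by apply: ler_wsqrtr; rewrite lerDl sqr_ge0.
Qed.

Lemma cabs_ge_Im z : `|complex.Im z| <= cabs z.
Proof.
case: z => a b; rewrite /cabs /Normc.normc /= -sqrtr_sqr.
by apply: ler_wsqrtr; rewrite lerDr sqr_ge0.
Qed.

Lemma cabs_le_ReIm z : cabs z <= `|complex.Re z| + `|complex.Im z|.
Proof.
case: z => a b.
have -> : (a +i* b)%C = (a%:C)%C + (0 +i* b)%C.
  by apply/eqP; rewrite eq_complex /= addr0 add0r !eqxx.
apply: le_trans (cabsD _ _) _; rewrite cabsR /= addr0 add0r lerD2l.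
by rewrite /cabs /Normc.normc /= expr0n /= add0r sqrtr_sqr.
Qed.

Lemma ReB z w : complex.Re (z - w) = complex.Re z - complex.Re w.
Proof. by case: z; case: w. Qed.

Lemma ImB z w : complex.Im (z - w) = complex.Im z - complex.Im w.
Proof. by case: z; case: w. Qed.

Lemma ReMR z k : complex.Re (z * (k%:C)%C) = complex.Re z * k.
Proof. by case: z => a b /=; rewrite mulr0 subr0. Qed.

Lemma ImMR z k : complex.Im (z * (k%:C)%C) = complex.Im z * k.
Proof. by case: z => a b /=; rewrite mulr0 add0r. Qed.

Lemma cabs_lin_le (p q u v : C) (X : R) : 0 <= X ->
  X * cabs (p * u + q * v) <= cabs p * (X * cabs u) + cabs q * (X * cabs v).
Proof.
move=> X0; rewrite mulrCA [cabs q * _]mulrCA -mulrDr ler_wpM2l //.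
by apply: le_trans (cabsD _ _) _; rewrite !cabsM.
Qed.

Lemma ler_cabs_lin (p q : C) (A B MA MB : R) : A <= MA -> B <= MB ->
  cabs p * A + cabs q * B <= cabs p * MA + cabs q * MB.
Proof. by move=> HA HB; apply: lerD; apply: ler_wpM2l; rewrite ?cabs_ge0. Qed.

Lemma cabs_lin_lt (p q : C) (A B e : R) : 0 < e -> 0 <= A -> 0 <= B ->
  A < e / (cabs p + cabs q + 1) -> B < e / (cabs p + cabs q + 1) ->
  cabs p * A + cabs q * B < e.
Proof.
move=> e0 A0 B0 HA HB.
have p0 := cabs_ge0 p; have q0 := cabs_ge0 q.
set c := cabs p + cabs q + 1 in HA HB.
have c0 : 0 < c by rewrite /c ltr_wpDl // addr_ge0.
apply: (@le_lt_trans _ _ ((cabs p + cabs q) * (e / c))).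
  by rewrite mulrDl; apply: ler_cabs_lin; apply: ltW.
rewrite mulrCA gtr_pMr // ltr_pdivrMr // mul1r /c; lra.
Qed.

End ComplexModulus.

Section MultiIndices.
Variable R : realType.
Variable d : nat.
Local Notation pt := 'rV[R]_d.
Local Notation mindex := {ffun 'I_d -> nat}.
Local Notation mz := (@mzero d).
Implicit Types (a b : mindex) (x y : pt).

Lemma mlen_mincr b j : mlen (mincr b j) = (mlen b).+1.
Proof.
rewrite /mlen; under eq_bigr => k _ do rewrite ffunE.
have E : (\sum_(k < d) (k == j) = 1)%N.
  by rewrite (bigD1 j) //= eqxx big1 ?addn0 // => k /negbTE ->.
by rewrite big_split /= E addn1.
Qed.

Lemma mlen_mzero : mlen mz = 0%N.
Proof. by rewrite /mlen big1 // => k _; rewrite ffunE. Qed.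

Lemma mindex_le_mlen a k : (a k <= mlen a)%N.
Proof. by rewrite /mlen (bigD1 k) //= leq_addr. Qed.

Lemma mindex_ind (P : mindex -> Prop) :
  P mz -> (forall b j, P b -> P (mincr b j)) -> forall b, P b.
Proof.
move=> P0 PS; suff PN n b : mlen b = n -> P b by move=> b; exact: (PN _ b erefl).
elim: n b => [|n IH] b Hb.
  suff -> : b = mz by [].
  by apply/ffunP => k; rewrite ffunE; apply/eqP; rewrite -leqn0 -Hb mindex_le_mlen.
have [j Hj] : exists j, (0 < b j)%N.
  apply/existsP; apply: contraT; rewrite negb_exists => /forallP b0.
  move: Hb; rewrite /mlen big1 // => k _.
  by have := b0 k; rewrite lt0n negbK => /eqP.
pose b' : mindex := [ffun k => (b k - (k == j))%N].
have Eb : b = mincr b' j.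
  apply/ffunP => k; rewrite !ffunE.
  by case: (eqVneq k j) => [->|_] /=; [rewrite subnK | rewrite subn0 addn0].
rewrite Eb; apply/PS/IH.
by move: Hb; rewrite Eb mlen_mincr => -[].
Qed.

Lemma xpow_mincr x a k : xpow x (mincr a k) = xpow x a * x 0 k.
Proof.
rewrite /xpow; under eq_bigr => i _ do rewrite ffunE exprD.
rewrite big_split /=; congr (_ * _).
rewrite (bigD1 k) //= eqxx expr1 big1 ?mulr1 //.
by move=> i /negbTE ->; rewrite expr0.
Qed.

Lemma xpow_mzero x : xpow x mz = 1.
Proof. by rewrite /xpow big1 // => i _; rewrite ffunE expr0. Qed.

Lemma mfact_mzero : mfact R mz = 1.
Proof. by rewrite /mfact big1 // => i _; rewrite ffunE. Qed.

Lemma mfact_gt0 a : 0 < mfact R a.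
Proof. by rewrite /mfact ltr0n prodn_gt0 // => i; exact: fact_gt0. Qed.

Lemma normr_xpow_le x a (r : R) : (forall k, `|x 0 k| <= r) ->
  `|xpow x a| <= r ^+ mlen a.
Proof.
move=> xr; rewrite /xpow /mlen -prodrXr normr_prod.
apply: ler_prod => i _; rewrite normr_ge0 normrX lerXn2r ?nnegrE //.
exact: le_trans (xr i).
Qed.

Lemma ptnorm_ge0 x : 0 <= ptnorm x.
Proof. by rewrite /ptnorm; elim/big_ind: _ => // u v u0 v0; rewrite le_max u0. Qed.

Lemma le_ptnorm x k : `|x 0 k| <= ptnorm x.
Proof. exact: (le_bigmax _ (fun k => `|x 0 k|)). Qed.

Lemma ptnorm_ge_coord x (r : R) : 0 < r -> r <= ptnorm x -> exists k, r <= `|x 0 k|.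
Proof.
move=> r0 rx; apply/not_existsP => xr; move: rx; apply/negP; rewrite -ltNge.
by apply: bigmax_lt => // k _; rewrite ltNge; apply/negP => /(xr k).
Qed.

Lemma sum_dist_le_ptnorm x y : \sum_j `|y 0 j - x 0 j| <= d%:R * ptnorm (y - x).
Proof.
apply: (@le_trans _ _ (\sum_(j < d) ptnorm (y - x))).
  by apply: ler_sum => j _; have := le_ptnorm (y - x) j; rewrite !mxE.
by rewrite sumr_const card_ord mulr_natl.
Qed.

End MultiIndices.

Section Derivatives.
Variable R : realType.
Variable d : nat.
Local Notation C := (R[i]).
Local Notation pt := 'rV[R]_d.
Implicit Types (f g : pt -> C) (p q : C).

Lemma is_partial_lin j f f' g g' p q :
  is_partial j f f' -> is_partial j g g' ->
  is_partial j (fun x => p * f x + q * g x) (fun x => p * f' x + q * g' x).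
Proof.
move=> Hf Hg x e e0.
have ec0 : 0 < e / (cabs p + cabs q + 1).
  by rewrite divr_gt0 // ltr_wpDl // addr_ge0 // cabs_ge0.
have [d1 [d10 H1]] := Hf x _ ec0; have [d2 [d20 H2]] := Hg x _ ec0.
exists (Num.min d1 d2); split; first by rewrite lt_min d10 d20.
move=> h h0; rewrite lt_min => /andP[hd1 hd2].
set y := x + h *: unitv R j; set hi := ((h^-1)%:C)%C.
have -> : (p * f y + q * g y - (p * f x + q * g x)) * hi - (p * f' x + q * g' x)
  = p * ((f y - f x) * hi - f' x) + q * ((g y - g x) * hi - g' x) by ring.
apply: le_lt_trans (cabsD _ _) _; rewrite !cabsM.
by apply: cabs_lin_lt; rewrite ?cabs_ge0 //; [apply: H1 | apply: H2].
Qed.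

Lemma is_partial_uniq j f g1 g2 : is_partial j f g1 -> is_partial j f g2 -> g1 = g2.
Proof.
move=> H1 H2; apply: funext => x; apply: contrapT => /eqP g12.
set c := cabs (g1 x - g2 x).
have c0 : 0 < c.
  by rewrite lt_def cabs_ge0 andbT; apply: contra g12 => /eqP/cabs_eq0/eqP; rewrite subr_eq0.
have c20 : 0 < c / 2 by rewrite divr_gt0.
have [d1 [d10 K1]] := H1 x _ c20; have [d2 [d20 K2]] := H2 x _ c20.
set h := Num.min d1 d2 / 2.
have h0 : 0 < h by rewrite divr_gt0 // lt_min d10 d20.
have : `|h| < Num.min d1 d2.
  by rewrite gtr0_norm // ltr_pdivrMr // ltr_pMr ?lt_min ?d10 ?d20 // ltr1n.
rewrite lt_min => /andP[hd1 hd2].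
have := K1 h (lt0r_neq0 h0) hd1; have := K2 h (lt0r_neq0 h0) hd2.
set Q := (_ * _)%R => L2 L1.
have : c <= cabs (g1 x - Q) + cabs (Q - g2 x) by apply: cabs_distD.
by rewrite cabs_distC; lra.
Qed.

Lemma is_derivs_lin f Df g Dg p q :
  is_derivs f Df -> is_derivs g Dg ->
  is_derivs (fun x => p * f x + q * g x) (fun b x => p * Df b x + q * Dg b x).
Proof.
move=> [Hf0 Hf] [Hg0 Hg]; split; first by rewrite Hf0 Hg0.
by move=> b j; apply: is_partial_lin.
Qed.

Lemma is_derivs_uniq f D1 D2 : is_derivs f D1 -> is_derivs f D2 -> D1 = D2.
Proof.
move=> [H10 H1] [H20 H2]; apply: funext; apply: mindex_ind; first by rewrite H10 H20.
by move=> b j Eb; apply: (is_partial_uniq (H1 b j)); rewrite Eb.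
Qed.

Lemma is_derivs_ext f D f' D' : is_derivs f D ->
  (forall x, f x = f' x) -> (forall b x, D b x = D' b x) -> is_derivs f' D'.
Proof.
move=> fD ff' DD'.
have -> : f' = f by apply: funext => x; rewrite ff'.
by have -> : D' = D by apply: funext => b; apply: funext => x; rewrite DD'.
Qed.

Lemma is_derivs_scale f D (c : R) : is_derivs f D ->
  is_derivs (fun x => (c%:C)%C * f x) (fun b x => (c%:C)%C * D b x).
Proof.
by move=> fD; apply: is_derivs_ext (is_derivs_lin (c%:C)%C 0 fD fD) _ _ => *;
  rewrite mul0r addr0.
Qed.

Lemma is_derivs_sub f Df g Dg : is_derivs f Df -> is_derivs g Dg ->
  is_derivs (fun x => f x - g x) (fun b x => Df b x - Dg b x).
Proof.
by move=> fD gD; apply: is_derivs_ext (is_derivs_lin 1 (-1) fD gD) _ _ => *;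
  rewrite mul1r mulN1r.
Qed.

Lemma ccontinuous_lin f g p q : ccontinuous f -> ccontinuous g ->
  ccontinuous (fun x => p * f x + q * g x).
Proof.
move=> Hf Hg x e e0.
have ec0 : 0 < e / (cabs p + cabs q + 1).
  by rewrite divr_gt0 // ltr_wpDl // addr_ge0 // cabs_ge0.
have [d1 [d10 H1]] := Hf x _ ec0; have [d2 [d20 H2]] := Hg x _ ec0.
exists (Num.min d1 d2); split; first by rewrite lt_min d10 d20.
move=> y; rewrite lt_min => /andP[hd1 hd2].
have -> : p * f y + q * g y - (p * f x + q * g x) = p * (f y - f x) + q * (g y - g x) by ring.
apply: le_lt_trans (cabsD _ _) _; rewrite !cabsM.
by apply: cabs_lin_lt; rewrite ?cabs_ge0 //; [apply: H1 | apply: H2].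
Qed.

End Derivatives.

Section GelfandShilovSpace.
Variable R : realType.
Variable d : nat.
Local Notation C := (R[i]).
Local Notation pt := 'rV[R]_d.
Local Notation mindex := {ffun 'I_d -> nat}.
Local Notation mz := (@mzero d).
Variables s t : R.
Implicit Types (f g : pt -> C) (p q : C) (a b : mindex).

Definition gs_wt (h : R) a b :=
  h ^+ (mlen a + mlen b) / ((mfact R a) `^ t * (mfact R b) `^ s).

Lemma gs_wt_gt0 h a b : 0 < h -> 0 < gs_wt h a b.
Proof.
by move=> h0; rewrite divr_gt0 ?exprn_gt0 // mulr_gt0 // powR_gt0 // mfact_gt0.
Qed.

Lemma gs_wt_le h h' a b : 0 < h -> h <= h' -> gs_wt h a b <= gs_wt h' a b.
Proof.
move=> h0 hh'; rewrite ler_wpM2r ?invr_ge0 ?mulr_ge0 ?powR_ge0 //.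
by rewrite lerXn2r // nnegrE ltW // (lt_le_trans h0).
Qed.

Lemma gs_wt00 h : gs_wt h mz mz = 1.
Proof. by rewrite /gs_wt mlen_mzero expr0 mfact_mzero powR1 mulr1 invr1 mulr1. Qed.

Lemma gs_wt_scale r h a b : 0 < h ->
  gs_wt r a b = (r / h) ^+ (mlen a + mlen b) * gs_wt h a b.
Proof. by move=> h0; rewrite /gs_wt expr_div_n mulrA divfK // expf_neq0 // gt_eqF. Qed.

Lemma gs_wt_half h a b : gs_wt (h / 2) a b = gs_wt h a b / 2 ^+ (mlen a + mlen b).
Proof. by rewrite /gs_wt expr_div_n mulrAC. Qed.

Lemma pboundE h f M : pbound s t h f M <-> exists D, is_derivs f D /\
  forall x a b, gs_wt h a b * (`|xpow x a| * cabs (D b x)) <= M.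
Proof. by []. Qed.

Lemma pbound_ge0 h f M : 0 < h -> pbound s t h f M -> 0 <= M.
Proof.
move=> h0 /pboundE [D [_ DM]]; apply: le_trans (DM 0 mz mz).
have w0 := ltW (gs_wt_gt0 mz mz h0).
by rewrite mulr_ge0 // mulr_ge0 ?cabs_ge0.
Qed.

Lemma pbound_lin h1 h2 f g M1 M2 p q : 0 < h1 -> 0 < h2 ->
  pbound s t h1 f M1 -> pbound s t h2 g M2 ->
  pbound s t (Num.min h1 h2) (fun x => p * f x + q * g x) (cabs p * M1 + cabs q * M2).
Proof.
move=> h10 h20 /pboundE [Df [fD fM]] /pboundE [Dg [gD gM]]; apply/pboundE.
exists (fun b x => p * Df b x + q * Dg b x); split; first exact: is_derivs_lin.
move=> x a b; have hm0 : 0 < Num.min h1 h2 by rewrite lt_min h10 h20.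
have w0 := ltW (gs_wt_gt0 a b hm0).
apply: le_trans (_ : cabs p * (gs_wt (Num.min h1 h2) a b * (`|xpow x a| * cabs (Df b x)))
    + cabs q * (gs_wt (Num.min h1 h2) a b * (`|xpow x a| * cabs (Dg b x))) <= _).
  by have := cabs_lin_le p q (Df b x) (Dg b x) (mulr_ge0 w0 (normr_ge0 (xpow x a)));
    rewrite !mulrA.
apply: ler_cabs_lin.
  apply: le_trans (fM x a b); rewrite ler_wpM2r ?mulr_ge0 ?cabs_ge0 //.
  by apply: gs_wt_le hm0 _; rewrite ge_min lexx.
apply: le_trans (gM x a b); rewrite ler_wpM2r ?mulr_ge0 ?cabs_ge0 //.
by apply: gs_wt_le hm0 _; rewrite ge_min lexx orbT.
Qed.

Lemma pbound_scale h f M (c : R) : 0 <= c -> pbound s t h f M ->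
  pbound s t h (fun x => (c%:C)%C * f x) (c * M).
Proof.
move=> c0 /pboundE [D [fD DM]]; apply/pboundE.
exists (fun b x => (c%:C)%C * D b x); split; first exact: is_derivs_scale.
move=> x a b; rewrite cabsM cabsR (ger0_norm c0).
have -> : gs_wt h a b * (`|xpow x a| * (c * cabs (D b x)))
    = c * (gs_wt h a b * (`|xpow x a| * cabs (D b x))) by ring.
by rewrite ler_wpM2l.
Qed.

Lemma schwartz_lin f g p q : schwartz f -> schwartz g ->
  schwartz (fun x => p * f x + q * g x).
Proof.
move=> [Df [fD [Cf Bf]]] [Dg [gD [Cg Bg]]].
exists (fun b x => p * Df b x + q * Dg b x); split; first exact: is_derivs_lin.
split=> [b|a b]; first exact: ccontinuous_lin.
have [M1 H1] := Bf a b; have [M2 H2] := Bg a b.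
exists (cabs p * M1 + cabs q * M2) => x.
exact: le_trans (cabs_lin_le _ _ _ _ (normr_ge0 _)) (ler_cabs_lin _ _ (H1 x) (H2 x)).
Qed.

Lemma GS_lin f g p q : GS s t f -> GS s t g -> GS s t (fun x => p * f x + q * g x).
Proof.
move=> [Sf [h1 [M1 [h10 Pf]]]] [Sg [h2 [M2 [h20 Pg]]]].
split; first exact: schwartz_lin.
exists (Num.min h1 h2), (cabs p * M1 + cabs q * M2).
by split; [rewrite lt_min h10 h20 | exact: pbound_lin].
Qed.

Lemma GS_scale f (c : C) : GS s t f -> GS s t (fun x => c * f x).
Proof.
move=> Gf; have := GS_lin c 0 Gf Gf.
by congr (GS _ _ _); apply: funext => x; rewrite mul0r addr0.
Qed.

Lemma GS_sub f g : GS s t f -> GS s t g -> GS s t (fun x => f x - g x).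
Proof.
move=> Gf Gg; have := GS_lin 1 (-1) Gf Gg.
by congr (GS _ _ _); apply: funext => x; rewrite mul1r mulN1r.
Qed.

Lemma GS_derivs f : GS s t f -> exists D, is_derivs f D.
Proof. by move=> [[D [fD _]] _]; exists D. Qed.

End GelfandShilovSpace.

Section LineCalculus.
Variable R : realType.
Local Notation C := (R[i]).
Local Open Scope classical_set_scope.

Definition rderiv (r r' : R -> R) := forall u e, 0 < e -> exists del, 0 < del /\
  forall h, h != 0 -> `|h| < del -> `|(r (u + h) - r u) / h - r' u| < e.

Definition cderiv (g g' : R -> C) := forall u e, 0 < e -> exists del, 0 < del /\
  forall h, h != 0 -> `|h| < del -> cabs ((g (u + h) - g u) * ((h^-1)%:C)%C - g' u) < e.

Lemma rderiv_is_derive r r' (u : R) : rderiv r r' -> is_derive u 1 r (r' u).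
Proof.
move=> rr'.
have cv : (fun h : R => h^-1 *: ((r \o shift u) (h *: (1 : R)) - r u)) @ (0 : R)^'
    --> r' u.
  apply/cvgrPdist_lt => e e0; have [del [del0 Hd]] := rr' u e e0.
  near=> h; rewrite /= distrC -[h%:A]/(h * 1) mulr1 (addrC h u).
  rewrite -[h^-1 *: _]/(h^-1 * _) (mulrC h^-1); apply: Hd.
    by near: h; exact: nbhs_dnbhs_neq.
  by near: h; exact: dnbhs0_lt.
by apply: DeriveDef; [exact: cvgP cv | exact: cvg_lim cv].
Unshelve. all: by end_near.
Qed.

Lemma rderiv_lipschitz r r' a b K : rderiv r r' -> a <= b ->
  (forall u, a <= u <= b -> `|r' u| <= K) -> `|r b - r a| <= K * (b - a).
Proof.
move=> rr' ab r'K.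
have D (x : R) : is_derive x 1 r (r' x) by exact: rderiv_is_derive.
have Cr : {within `[a, b], continuous r}.
  apply: continuous_subspaceT => x.
  by have /derivable1_diffP/differentiable_continuous := @ex_derive _ _ _ _ _ _ _ (D x).
have [c cab ->] := MVT_segment ab (fun x _ => D x) Cr.
have ba : 0 <= b - a by rewrite subr_ge0.
rewrite normrM (ger0_norm ba) ler_wpM2r //.
by apply: r'K; move: cab; rewrite in_itv.
Qed.

Lemma cderiv_Re g g' : cderiv g g' ->
  rderiv (fun u => complex.Re (g u)) (fun u => complex.Re (g' u)).
Proof.
move=> gg' u e e0; have [del [del0 Hd]] := gg' u e e0; exists del; split => // h h0 hd.
by apply: le_lt_trans (Hd h h0 hd); rewrite -ReB -ReMR -ReB cabs_ge_Re.
Qed.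

Lemma cderiv_Im g g' : cderiv g g' ->
  rderiv (fun u => complex.Im (g u)) (fun u => complex.Im (g' u)).
Proof.
move=> gg' u e e0; have [del [del0 Hd]] := gg' u e e0; exists del; split => // h h0 hd.
by apply: le_lt_trans (Hd h h0 hd); rewrite -ImB -ImMR -ImB cabs_ge_Im.
Qed.

(* The constant 2 comes from estimating real and imaginary parts separately. *)
Lemma cderiv_lipschitz g g' a b K : cderiv g g' ->
  (forall u, Num.min a b <= u <= Num.max a b -> cabs (g' u) <= K) ->
  cabs (g b - g a) <= 2 * K * `|b - a|.
Proof.
move=> gg'; wlog ab : a b / a <= b => [hwlog|] g'K.
  have [ab|/ltW ba] := leP a b; first exact: hwlog ab g'K.
  by rewrite cabs_distC distrC; apply: hwlog ba _ => u; rewrite minC maxC; exact: g'K.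
rewrite (min_idPl ab) (max_idPr ab) in g'K.
apply: le_trans (cabs_le_ReIm _) _; rewrite ReB ImB [`|b - a|]ger0_norm ?subr_ge0 //.
have -> : 2 * K * (b - a) = K * (b - a) + K * (b - a) by ring.
apply: lerD.
  by apply: (rderiv_lipschitz (cderiv_Re gg') ab) => u /g'K; apply: le_trans (cabs_ge_Re _).
by apply: (rderiv_lipschitz (cderiv_Im gg') ab) => u /g'K; apply: le_trans (cabs_ge_Im _).
Qed.

Lemma cderiv_sub_linear g g' (c : C) : cderiv g g' ->
  cderiv (fun v => g v - (v%:C)%C * c) (fun v => g' v - c).
Proof.
move=> gg' u e e0; have [del [del0 Hd]] := gg' u e e0; exists del; split => // h h0 hd.
have hh : (h%:C)%C * ((h^-1)%:C)%C = 1 by rewrite -rmorphM divff.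
have -> : (g (u + h) - ((u + h)%:C)%C * c - (g u - (u%:C)%C * c)) * ((h^-1)%:C)%C
    - (g' u - c) = (g (u + h) - g u) * ((h^-1)%:C)%C - g' u
    + c * (1 - (h%:C)%C * ((h^-1)%:C)%C) by rewrite rmorphD; ring.
by rewrite hh subrr mulr0 addr0; exact: Hd.
Qed.

End LineCalculus.

Section PartialsCalculus.
Variable R : realType.
Variable d : nat.
Local Notation C := (R[i]).
Local Notation pt := 'rV[R]_d.
Implicit Types (F : pt -> C) (x y z : pt).

Lemma is_partial_line j F F' z : is_partial j F F' ->
  cderiv (fun u => F (z + u *: unitv R j)) (fun u => F' (z + u *: unitv R j)).
Proof.
move=> FF' u e e0; have [del [del0 Hd]] := FF' (z + u *: unitv R j) e e0.
by exists del; split => // h h0 hd; rewrite scalerDl addrA; exact: Hd.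
Qed.

Definition coord_path x y (k : nat) : pt := \row_j (if (j < k)%N then y 0 j else x 0 j).

Lemma coord_path0 x y : coord_path x y 0 = x.
Proof. by apply/rowP => j; rewrite mxE; congr (x _ _); apply: val_inj; rewrite /= ord1. Qed.

Lemma coord_path_d x y : coord_path x y d = y.
Proof.
by apply/rowP => j; rewrite mxE ltn_ord; congr (y _ _); apply: val_inj; rewrite /= ord1.
Qed.

Lemma coord_pathS x y (o : 'I_d) : coord_path x y o.+1
  = coord_path x y o + (y 0 o - x 0 o) *: unitv R o.
Proof.
apply/rowP => j; rewrite /unitv !mxE /=.
have [->|jo] := eqVneq j o; first by rewrite ltnSn ltnn mulr1 addrC subrK.
rewrite mulr0 addr0 ltnS leq_eqVlt.
by have /negbTE -> : val j != val o by apply: contra jo => /eqP/val_inj ->.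
Qed.

Lemma cabs_sub_le_partials F (P : 'I_d -> pt -> C) K :
  (forall j, is_partial j F (P j)) -> (forall j y, cabs (P j y) <= K) ->
  forall x y, cabs (F y - F x) <= 2 * K * \sum_j `|y 0 j - x 0 j|.
Proof.
move=> FP PK x y.
suff Hk k : (k <= d)%N -> cabs (F (coord_path x y k) - F x)
    <= 2 * K * \sum_(j < d | (j < k)%N) `|y 0 j - x 0 j|.
  by have := Hk d (leqnn d); rewrite coord_path_d (eq_bigl xpredT) // => j; rewrite ltn_ord.
elim: k => [_|k IH kd]; first by rewrite coord_path0 subrr cabs0 big_pred0 // mulr0.
pose o := Ordinal kd.
apply: le_trans (cabs_distD _ (F (coord_path x y k)) _) _.
rewrite (bigD1 o) ?ltnSn //= mulrDr.
rewrite (eq_bigl (fun j : 'I_d => j < k)%N); last first.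
  move=> j; rewrite ltnS leq_eqVlt.
  have [->|jo] := eqVneq j o; first by rewrite eqxx andbF /= ltnn.
  have /negbTE -> : val j != k by apply: contra jo => /eqP jk; apply/eqP/val_inj.
  by rewrite andbT.
apply: lerD; last exact: IH (ltnW kd).
have := cderiv_lipschitz (a := 0) (b := y 0 o - x 0 o)
  (is_partial_line (coord_path x y k) (FP o)) (fun u _ => PK o _).
by rewrite -(coord_pathS x y o) scale0r addr0 subr0.
Qed.

Lemma ccontinuous_of_bounded_partials F (P : 'I_d -> pt -> C) K : 0 <= K ->
  (forall j, is_partial j F (P j)) -> (forall j y, cabs (P j y) <= K) -> ccontinuous F.
Proof.
move=> K0 FP PK x e e0.
have c0 : 0 < 2 * K * d%:R + 1 by rewrite ltr_wpDl // !mulr_ge0.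
exists (e / (2 * K * d%:R + 1)); split; first by rewrite divr_gt0.
move=> y; rewrite ltr_pdivlMr // => yx.
apply: le_lt_trans (cabs_sub_le_partials FP PK x y) _.
apply: (@le_lt_trans _ _ (2 * K * (d%:R * ptnorm (y - x)))).
  by rewrite ler_wpM2l ?mulr_ge0 ?sum_dist_le_ptnorm.
have := ptnorm_ge0 (y - x); have : 0 <= 2 * K * d%:R by rewrite !mulr_ge0.
nra.
Qed.

Lemma partial_taylor_le j F F1 F2 K x u : is_partial j F F1 -> is_partial j F1 F2 ->
  (forall y, cabs (F2 y) <= K) ->
  cabs (F (x + u *: unitv R j) - F x - (u%:C)%C * F1 x) <= 4 * K * u ^+ 2.
Proof.
move=> FF1 F1F2 F2K; have K0 : 0 <= K := le_trans (cabs_ge0 _) (F2K x).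
have F1u v : Num.min 0 u <= v <= Num.max 0 u ->
    cabs (F1 (x + v *: unitv R j) - F1 x) <= 2 * K * `|u|.
  move=> v0u.
  have := cderiv_lipschitz (a := 0) (b := v) (is_partial_line x F1F2) (fun w _ => F2K _).
  rewrite scale0r addr0 subr0 => /le_trans; apply; rewrite ler_wpM2l ?mulr_ge0 //.
  move: v0u; have [u0 /andP[v0 vu]|u0 /andP[uv v0]] := leP 0 u.
    by rewrite !ger0_norm // (le_trans v0 vu).
  by rewrite !ler0_norm ?(ltW u0) // lerN2.
have := cderiv_lipschitz (a := 0) (b := u)
  (cderiv_sub_linear (F1 x) (is_partial_line x FF1)) F1u.
rewrite scale0r addr0 mul0r !subr0 addrAC => /le_trans; apply.
by rewrite -real_normK ?num_real // (_ : 4 = 2 * 2) -?mulrA ?ler_wpM2l //; ring.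
Qed.

End PartialsCalculus.

Section ConvergenceIsBoundedPointwise.
Variable R : realType.
Variable d : nat.
Local Notation C := (R[i]).
Local Notation pt := 'rV[R]_d.
Local Notation mz := (@mzero d).
Variables s t : R.
Implicit Types (f g : pt -> C) (U : (pt -> C) -> Prop).

Lemma GS_nbhd0_scale U g (a : C) : GS_nbhd0 s t U -> U g -> cabs a <= 1 ->
  U (fun x => a * g x).
Proof.
move=> [_ [Uconv _]] Ug a1; have := Uconv g g a 0 Ug Ug.
by rewrite cabs0 addr0 => /(_ a1); congr U; apply: funext => x; rewrite mul0r addr0.
Qed.

Lemma GS_nbhd0_absorbs U f : GS_nbhd0 s t U -> GS s t f ->
  exists c : R, 0 < c /\ U (fun x => (c%:C)%C * f x).
Proof.
move=> [_ [_ Uball]] Gf; have [_ [h [M [h0 Pf]]]] := Gf.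
have [e [e0 Ue]] := Uball h h0.
have M1 : 0 < 2 * (M + 1) by rewrite mulr_gt0 // ltr_wpDl // (pbound_ge0 h0 Pf).
exists (e / (2 * (M + 1))); split; first by rewrite divr_gt0.
apply: Ue; first exact: GS_scale.
exists (e / (2 * (M + 1)) * M); split; last by apply: pbound_scale Pf; rewrite ltW ?divr_gt0.
have := pbound_ge0 h0 Pf.
rewrite mulrAC -mulrA gtr_pMr // ltr_pdivrMr // mul1r; lra.
Qed.

Lemma GS_cvg_bounded (phi : nat -> pt -> C) f : (forall n, GS s t (phi n)) ->
  GS_cvg_to s t phi f -> GS_bounded s t phi.
Proof.
move=> Gphi [Gf cvf] U HU; have [N UN] := cvf U HU; have [_ [Uconv _]] := HU.
have [cf [cf0 Uf]] := GS_nbhd0_absorbs HU Gf.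
have [cn cnP] := choice (fun n => GS_nbhd0_absorbs HU (Gphi n)).
have cn0 k : 0 < cn k by case: (cnP k).
have cn0i k : 0 < (cn k)^-1 by rewrite invr_gt0.
have S0 : 0 <= \sum_(k < N) (cn k)^-1 by rewrite sumr_ge0 // => k _; rewrite ltW.
have cfi0 : 0 < cf^-1 by rewrite invr_gt0.
(* [1 / lam] puts the tail in [U] via [f] and [phi_n - f], the head via each [c_n phi_n]. *)
pose lam := 1 + cf^-1 + \sum_(k < N) (cn k)^-1.
have lam0 : 0 < lam by rewrite /lam; lra.
have li0 : 0 <= lam^-1 by rewrite invr_ge0 ltW.
exists lam; split => // n.
have [Nn|nN] := leqP N n.
  have -> : (fun x => ((lam^-1)%:C)%C * phi n x) = (fun x => ((lam^-1)%:C)%C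
      * (phi n x - f x) + ((lam^-1 / cf)%:C)%C * ((cf%:C)%C * f x)).
    by apply: funext => x; rewrite mulrA -rmorphM divfK ?gt_eqF //; ring.
  apply: Uconv; [exact: UN | exact: Uf |].
  have q0 : 0 <= lam^-1 / cf by rewrite divr_ge0 // ltW.
  rewrite !cabsR (ger0_norm li0) (ger0_norm q0).
  by rewrite -[X in X + _]mulr1 -mulrDr mulrC ler_pdivrMr // mul1r /lam; lra.
have -> : (fun x => ((lam^-1)%:C)%C * phi n x) =
    (fun x => ((lam^-1 / cn n)%:C)%C * (((cn n)%:C)%C * phi n x)).
  by apply: funext => x; rewrite mulrA -rmorphM divfK // gt_eqF.
apply: GS_nbhd0_scale HU (cnP n).2 _.
have q0 : 0 <= lam^-1 / cn n by rewrite divr_ge0 // ltW.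
rewrite cabsR (ger0_norm q0) mulrC ler_pdivrMr // mul1r.
have := ler_sum_term (F := fun k : 'I_N => (cn k)^-1) (Ordinal nN) (fun k => ltW (cn0i k)).
by rewrite /lam /=; lra.
Qed.

Lemma eval_nbhd0 x (e : R) : 0 < e ->
  GS_nbhd0 s t (fun g => GS s t g /\ cabs (g x) < e).
Proof.
move=> e0; split; first by move=> g [].
split=> [g1 g2 a b [G1 g1e] [G2 g2e] ab1|h h0].
  split; first exact: GS_lin.
  apply: le_lt_trans (cabsD _ _) _; rewrite !cabsM.
  set m := Num.max (cabs (g1 x)) (cabs (g2 x)).
  apply: (@le_lt_trans _ _ m); last by rewrite gt_max g1e g2e.
  apply: (@le_trans _ _ ((cabs a + cabs b) * m)).
    by rewrite mulrDl; apply: ler_cabs_lin; rewrite le_max lexx ?orbT.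
  by rewrite ler_piMl // le_max cabs_ge0.
exists e; split => // g Gg [M [Me /pboundE [D [[D0 _] DM]]]]; split => //.
have := DM x mz mz; rewrite gs_wt00 xpow_mzero normr1 !mul1r D0.
by move/le_lt_trans; apply.
Qed.

Lemma GS_cvg_pointwise (phi : nat -> pt -> C) f : GS_cvg_to s t phi f ->
  pointwise_converges phi.
Proof.
move=> [_ cvf] x; exists (f x) => e e0.
have [N UN] := cvf _ (eval_nbhd0 x e0).
by exists N => n /UN [].
Qed.

End ConvergenceIsBoundedPointwise.

Section BoundedIsRegular.
Variable R : realType.
Variable d : nat.
Local Notation C := (R[i]).
Local Notation pt := 'rV[R]_d.
Local Notation mindex := {ffun 'I_d -> nat}.
Variables s t : R.
Implicit Types (f g : pt -> C).

Section WeightedEvaluations.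
Variables (xk : nat -> pt) (ak bk : nat -> mindex).

Definition eval_wt (k : nat) := gs_wt s t (k.+1%:R)^-1 (ak k) (bk k).

Definition weighted_evals_le1 g := GS s t g /\ forall D, is_derivs g D ->
  forall k, eval_wt k * `|xpow (xk k) (ak k)| * cabs (D (bk k) (xk k)) <= 1.

(* At step [h], only the finitely many [k] with [1/(k+1) > h] escape control by [p_h]. *)
Lemma eval_wt_le_step h : 0 < h ->
  exists B : R, 0 < B /\ forall k, eval_wt k <= B * gs_wt s t h (ak k) (bk k).
Proof.
move=> h0; pose r k := ((k.+1%:R)^-1 / h) ^+ (mlen (ak k) + mlen (bk k)).
have r0 k : 0 <= r k by rewrite exprn_ge0 // divr_ge0 ?invr_ge0 ?ltW.
pose K := Num.trunc h^-1.
have S0 : 0 <= \sum_(k < K) r k by apply: sumr_ge0 => k _.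
exists (1 + \sum_(k < K) r k); split=> [|k]; first by lra.
rewrite /eval_wt (gs_wt_scale _ _ _ _ _ h0) ler_pM2r ?gs_wt_gt0 // -/(r k).
have [kK|Kk] := ltnP k K.
  have := ler_sum_term (F := fun i : 'I_K => r i) (Ordinal kK) (fun i => r0 i).
  by rewrite -/(r k) /=; lra.
apply: le_trans (_ : 1 <= _); last by rewrite lerDl.
apply: exprn_ile1; first by rewrite divr_ge0 ?invr_ge0 // ltW.
rewrite ler_pdivrMr // mul1r.
rewrite -[X in _ <= X](invrK h) lef_pV2 ?posrE ?invr_gt0 ?ltr0n //.
by apply: ltW; apply: lt_le_trans (truncnS_gt h^-1) _; rewrite ler_nat.
Qed.

Lemma weighted_evals_nbhd0 : GS_nbhd0 s t weighted_evals_le1.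
Proof.
split; first by move=> g [].
split=> [g1 g2 p q [G1 g1k] [G2 g2k] pq1 | h h0].
  split=> [|D gD k]; first exact: GS_lin.
  have [D1 D1g] := GS_derivs G1; have [D2 D2g] := GS_derivs G2.
  rewrite (is_derivs_uniq gD (is_derivs_lin p q D1g D2g)).
  have w0 : 0 <= eval_wt k * `|xpow (xk k) (ak k)|.
    by rewrite mulr_ge0 // ltW // gs_wt_gt0 // invr_gt0 ltr0n.
  apply: le_trans (_ : cabs p * 1 + cabs q * 1 <= _); last by rewrite !mulr1.
  apply: le_trans (cabs_lin_le _ _ _ _ w0) _.
  exact: ler_cabs_lin (g1k _ D1g k) (g2k _ D2g k).
have [B [B0 HB]] := eval_wt_le_step h0.
exists B^-1; split=> [|g Gg [M [MB /pboundE [D0 [gD0 D0M]]]]]; first by rewrite invr_gt0.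
split=> // D gD k; rewrite (is_derivs_uniq gD gD0).
have M0 := pbound_ge0 h0 (ex_intro _ D0 (conj gD0 D0M)).
apply: le_trans (_ : B * M <= _); last by rewrite -(mulfV (lt0r_neq0 B0)) ler_pM2l // ltW.
rewrite -mulrA; apply: le_trans (ler_wpM2r _ (HB k)) _; first by rewrite mulr_ge0 ?cabs_ge0.
by rewrite -mulrA ler_pM2l // D0M.
Qed.

End WeightedEvaluations.

Lemma GS_bounded_regular (phi : nat -> pt -> C) (Dn : nat -> mindex -> pt -> C) :
  (forall n, is_derivs (phi n) (Dn n)) -> GS_bounded s t phi ->
  exists h0 M0, 0 < h0 /\
    forall n x a b, gs_wt s t h0 a b * (`|xpow x a| * cabs (Dn n b x)) <= M0.
Proof.
move=> phiD Hb; apply: contrapT => unbounded.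
have bad k : exists p : nat * pt * (mindex * mindex), k%:R < gs_wt s t (k.+1%:R)^-1
    p.2.1 p.2.2 * (`|xpow p.1.2 p.2.1| * cabs (Dn p.1.1 p.2.2 p.1.2)).
  apply: contrapT => nbad; apply: unbounded; exists (k.+1%:R)^-1, k%:R.
  split=> [|n x a b]; first by rewrite invr_gt0 ltr0n.
  by rewrite leNgt; apply/negP => lt; apply: nbad; exists (n, x, (a, b)).
have [P HP] := choice bad.
have [lam [lam0 Ulam]] := Hb _ (weighted_evals_nbhd0 (fun k => (P k).1.2)
  (fun k => (P k).2.1) (fun k => (P k).2.2)).
pose k := (Num.trunc lam).+1; pose n := (P k).1.1.
have li0 : 0 <= lam^-1 by rewrite invr_ge0 ltW.
have := (Ulam n).2 _ (is_derivs_scale (lam^-1) (phiD n)) k.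
rewrite /eval_wt cabsM cabsR (ger0_norm li0) mulrCA mulrC ler_pdivrMr // mul1r => Pk.
have lamk : lam < k%:R := truncnS_gt lam.
by move: (HP k); rewrite mulrA => /lt_le_trans/(_ Pk)/(lt_trans lamk); rewrite ltxx.
Qed.

End BoundedIsRegular.

Lemma eventually_forall_fin (T : finType) (P : T -> nat -> Prop) :
  (forall i, exists N, forall n, (N <= n)%N -> P i n) ->
  exists N, forall n, (N <= n)%N -> forall i, P i n.
Proof.
move=> HP; have [N HN] := choice HP.
by exists (\max_i N i) => n Nn i; apply: HN; apply: leq_trans Nn; exact: leq_bigmax.
Qed.

Section ComplexSequences.
Variable R : realType.
Local Notation C := (R[i]).
Local Open Scope classical_set_scope.
Implicit Types (u v : nat -> C) (L K : C).

Definition cvgC u L := forall e, 0 < e -> exists N, forall n, (N <= n)%N -> cabs (u n - L) < e.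

Definition cauchyC u := forall e, 0 < e ->
  exists N, forall n m, (N <= n)%N -> (N <= m)%N -> cabs (u n - u m) < e.

Lemma cauchyR_cvg (v : nat -> R) :
  (forall e, 0 < e -> exists N, forall n m, (N <= n)%N -> (N <= m)%N -> `|v n - v m| < e) ->
  exists l, forall e, 0 < e -> exists N, forall n, (N <= n)%N -> `|v n - l| < e.
Proof.
move=> vC; have cv : cvg (v @ \oo).
  apply/cauchy_cvgP/cauchy_exP => e e0; have [N HN] := vC e e0.
  by exists (v N), N => // n /= Nn; rewrite /ball /= HN.
exists (lim (v @ \oo)) => e e0; move/cvgrPdist_lt: cv => /(_ e e0) [N _ HN].
by exists N => n Nn; rewrite distrC; exact: HN.
Qed.

Lemma cauchyC_cvg u : cauchyC u -> exists L, cvgC u L.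
Proof.
move=> uC.
have [LR HR] : exists l, forall e, 0 < e -> exists N, forall n, (N <= n)%N ->
    `|complex.Re (u n) - l| < e.
  apply: cauchyR_cvg => e e0; have [N HN] := uC e e0; exists N => n m Nn Nm.
  by apply: le_lt_trans (HN n m Nn Nm); rewrite -ReB cabs_ge_Re.
have [LI HI] : exists l, forall e, 0 < e -> exists N, forall n, (N <= n)%N ->
    `|complex.Im (u n) - l| < e.
  apply: cauchyR_cvg => e e0; have [N HN] := uC e e0; exists N => n m Nn Nm.
  by apply: le_lt_trans (HN n m Nn Nm); rewrite -ImB cabs_ge_Im.
exists (LR +i* LI)%C => e e0; have e20 : 0 < e / 2 by rewrite divr_gt0.
have [N1 H1] := HR _ e20; have [N2 H2] := HI _ e20.
exists (maxn N1 N2) => n; rewrite geq_max => /andP[n1 n2].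
apply: le_lt_trans (cabs_le_ReIm _) _; rewrite ReB ImB /=.
by have := H1 n n1; have := H2 n n2; lra.
Qed.

Lemma cvgC_lin u v L K (p q : C) : cvgC u L -> cvgC v K ->
  cvgC (fun n => p * u n + q * v n) (p * L + q * K).
Proof.
move=> uL vK e e0.
have ec0 : 0 < e / (cabs p + cabs q + 1).
  by rewrite divr_gt0 // ltr_wpDl // addr_ge0 // cabs_ge0.
have [N1 H1] := uL _ ec0; have [N2 H2] := vK _ ec0.
exists (maxn N1 N2) => n; rewrite geq_max => /andP[n1 n2].
have -> : p * u n + q * v n - (p * L + q * K) = p * (u n - L) + q * (v n - K) by ring.
apply: le_lt_trans (cabsD _ _) _; rewrite !cabsM.
by apply: cabs_lin_lt; rewrite ?cabs_ge0 //; [apply: H1 | apply: H2].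
Qed.

Lemma cvgC_le u L (X B : R) : cvgC u L -> 0 <= X ->
  (forall n, X * cabs (u n) <= B) -> X * cabs L <= B.
Proof.
move=> uL X0 uB; apply/ler_addgt0Pr => e e0.
have X1 : 0 < X + 1 by rewrite ltr_wpDl.
have [N HN] := uL (e / (X + 1)) (divr_gt0 e0 X1).
apply: (@le_trans _ _ (X * cabs (u N) + X * cabs (u N - L))).
  rewrite -mulrDr ler_wpM2l //.
  have E : L = u N - (u N - L) by rewrite opprB addrC subrK.
  by rewrite {1}E; exact: cabsB.
apply: lerD; first exact: uB.
apply: (@le_trans _ _ (X * (e / (X + 1)))); first by rewrite ler_wpM2l // ltW // HN.
by rewrite mulrCA ger_pMr // ler_pdivrMr // mul1r; lra.
Qed.

Lemma cvgC_cauchy u L : cvgC u L -> cauchyC u.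
Proof.
move=> uL e e0; have [N HN] : exists N, forall n, (N <= n)%N -> cabs (u n - L) < e / 2.
  by apply: uL; rewrite divr_gt0.
exists N => n m Nn Nm; apply: le_lt_trans (cabs_distD _ L _) _.
by rewrite [e]splitr (cabs_distC L) ltrD ?HN.
Qed.

Lemma cauchyC_of_taylor (u : R -> nat -> C) (w : nat -> C) (K : R) : 0 <= K ->
  (forall r, exists L, cvgC (u r) L) ->
  (forall n r, cabs (u r n - u 0 n - (r%:C)%C * w n) <= K * r ^+ 2) -> cauchyC w.
Proof.
move=> K0 ucv uw e e0.
(* A step [r] proportional to [e] makes the two [O(r^2)] errors smaller than [r e / 2]. *)
pose r := e / (4 * (K + 1)).
have K1 : 0 < K + 1 by rewrite ltr_wpDl.
have r0 : 0 < r by rewrite divr_gt0 // mulr_gt0.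
have Kr : K * r < e / 4.
  rewrite /r mulrA ltr_pdivrMr ?mulr_gt0 //.
  have -> : e / 4 * (4 * (K + 1)) = e * K + e by field.
  by rewrite mulrC ltrDl.
have er4 : 0 < r * (e / 4) by rewrite mulr_gt0 // divr_gt0.
have [L1 /cvgC_cauchy/(_ _ er4) [N1 H1]] := ucv r.
have [L0 /cvgC_cauchy/(_ _ er4) [N0 H0]] := ucv 0.
exists (maxn N1 N0) => n m; rewrite !geq_max => /andP[n1 n0] /andP[m1 m0].
have key : (r%:C)%C * (w n - w m) = (u r n - u r m) - (u 0 n - u 0 m)
    - (u r n - u 0 n - (r%:C)%C * w n) + (u r m - u 0 m - (r%:C)%C * w m) by ring.
have : r * cabs (w n - w m) < r * e.
  rewrite -[r in r * cabs _]ger0_norm ?ltW // -cabsR -cabsM key.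
  apply: le_lt_trans (cabs_sub_sub_add_le _ _ _ _) _.
  have rK : K * r ^+ 2 < r * (e / 4) by rewrite expr2 mulrCA ltr_pM2l.
  have := uw n r; have := uw m r; have := H1 n m n1 m1; have := H0 n m n0 m0.
  lra.
by rewrite ltr_pM2l.
Qed.

End ComplexSequences.

Section PointwiseToUniform.
Variable R : realType.
Variable d : nat.
Local Notation C := (R[i]).
Local Notation pt := 'rV[R]_d.
Implicit Types (x y : pt).

Lemma is_partial_of_taylor j (F F1 : pt -> C) (K : R) : 0 <= K ->
  (forall x u, cabs (F (x + u *: unitv R j) - F x - (u%:C)%C * F1 x) <= K * u ^+ 2) ->
  is_partial j F F1.
Proof.
move=> K0 FK x e e0; have K1 : 0 < K + 1 by rewrite ltr_wpDl.
exists (e / (K + 1)); split=> [|h h0]; first by rewrite divr_gt0.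
rewrite ltr_pdivlMr // => he.
have hh : (h%:C)%C * ((h^-1)%:C)%C = 1 by rewrite -rmorphM divff.
have -> : (F (x + h *: unitv R j) - F x) * ((h^-1)%:C)%C - F1 x =
    (F (x + h *: unitv R j) - F x - (h%:C)%C * F1 x) * ((h^-1)%:C)%C.
  by rewrite -{1}[F1 x]mulr1 -hh; ring.
have h0' : 0 < `|h| by rewrite normr_gt0.
rewrite cabsM cabsR normfV ltr_pdivrMr //; apply: le_lt_trans (FK x h) _.
by rewrite -real_normK ?num_real // expr2; nra.
Qed.

Lemma cube_grid (Rr del : R) : 0 < del ->
  exists (N : nat) (z : {ffun 'I_d -> 'I_N} -> pt),
    forall x, ptnorm x < Rr -> exists i, forall k, `|x 0 k - z i 0 k| <= del.
Proof.
move=> del0; pose N := (Num.trunc (2 * Rr / del)).+1.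
exists N, (fun i : {ffun 'I_d -> 'I_N} => \row_k (- Rr + (i k)%:R * del)) => x xR.
have xk k : - Rr < x 0 k < Rr by rewrite -ltr_norml (le_lt_trans (le_ptnorm x k)).
pose q k := (x 0 k + Rr) / del.
have q0 k : 0 <= q k.
  rewrite divr_ge0 ?(ltW del0) //.
  by case/andP: (xk k) => /ltW; rewrite -subr_ge0 opprK.
have qN k : (Num.trunc (q k) < N)%N.
  rewrite ltnS le_truncn // ler_pM2r ?invr_gt0 // mulr2n mulrDl mul1r lerD2r.
  by case/andP: (xk k) => _ /ltW.
exists [ffun k => Ordinal (qN k)] => k; rewrite mxE ffunE /=.
have /andP[t1 t2] := truncn_itv (q0 k).
have -> : x 0 k - (- Rr + (Num.trunc (q k))%:R * del) = (q k - (Num.trunc (q k))%:R) * del.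
  by rewrite mulrBl /q divfK ?gt_eqF //; ring.
rewrite normrM (gtr0_norm del0) ger0_norm ?subr_ge0 // ler_piMl ?subr_ge0 ?ltW //.
by move: t2; rewrite -natr1; lra.
Qed.

Lemma unif_cvg0_on_cube (g : nat -> pt -> C) (L Rr e : R) : 0 <= L -> 0 < e ->
  (forall x, cvgC (fun n => g n x) 0) ->
  (forall n x y, cabs (g n y - g n x) <= L * \sum_j `|y 0 j - x 0 j|) ->
  exists N, forall n, (N <= n)%N -> forall x, ptnorm x < Rr -> cabs (g n x) <= e.
Proof.
move=> L0 e0 g0 gL; have e20 : 0 < e / 2 by rewrite divr_gt0.
have Ld0 : 0 < L * d%:R + 1 by rewrite ltr_wpDl ?mulr_ge0.
pose del := e / 2 / (L * d%:R + 1).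
have del_def : del * (L * d%:R + 1) = e / 2 by rewrite divfK ?gt_eqF.
have [G [z zP]] := cube_grid Rr (divr_gt0 e20 Ld0).
have [N HN] := eventually_forall_fin (P := fun i n => cabs (g n (z i) - 0) < e / 2)
  (fun i => g0 (z i) _ e20).
exists N => n Nn x /zP [i xzi]; move/(_ n Nn i): HN; rewrite subr0 => gzi.
rewrite -[g n x]subr0; apply: le_trans (cabs_distD _ (g n (z i)) _) _.
rewrite subr0 [e]splitr addrC; apply: lerD; first exact: ltW.
apply: le_trans (gL n (z i) x) _.
apply: le_trans (_ : L * \sum_(j < d) del <= _).
  by rewrite ler_wpM2l //; apply: ler_sum => k _; exact: xzi.
rewrite sumr_const card_ord.
have : 0 < del by rewrite divr_gt0.
by rewrite mulrDr mulr1 in del_def; lra.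
Qed.

Lemma xpow_tail_le x a (c V Rr : R) : 0 <= c -> 0 < Rr -> Rr <= ptnorm x ->
  (forall k, `|xpow x (mincr a k)| * c <= V) -> `|xpow x a| * c <= V / Rr.
Proof.
move=> c0 Rr0 /(ptnorm_ge_coord Rr0) [k Rxk] aV.
rewrite ler_pdivlMr //; apply: le_trans (aV k).
by rewrite xpow_mincr normrM [X in _ <= X]mulrAC ler_wpM2l ?mulr_ge0.
Qed.

End PointwiseToUniform.

Section LimitOfRegularSequence.
Variable R : realType.
Variable d : nat.
Local Notation C := (R[i]).
Local Notation pt := 'rV[R]_d.
Local Notation mindex := {ffun 'I_d -> nat}.
Local Notation mz := (@mzero d).
Variables s t : R.
Variable phi : nat -> pt -> C.
Variable Dn : nat -> mindex -> pt -> C.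
Hypothesis phiD : forall n, is_derivs (phi n) (Dn n).
Variables h0 M0 : R.
Hypothesis h0_gt0 : 0 < h0.
Hypothesis DnM0 : forall n x a b,
  gs_wt s t h0 a b * (`|xpow x a| * cabs (Dn n b x)) <= M0.
Hypothesis phi_cvg : pointwise_converges phi.
Implicit Types (a b : mindex) (x y : pt).

Definition dbound a b := M0 / gs_wt s t h0 a b.

Lemma dbound_ge0 a b : 0 <= dbound a b.
Proof.
have M0_ge0 : 0 <= M0.
  have w0 := ltW (gs_wt_gt0 s t mz mz h0_gt0).
  by apply: le_trans (DnM0 0 0 mz mz); rewrite mulr_ge0 // mulr_ge0 ?cabs_ge0.
by rewrite divr_ge0 // ltW // gs_wt_gt0.
Qed.

Lemma Dn_le_dbound n x a b : `|xpow x a| * cabs (Dn n b x) <= dbound a b.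
Proof. by rewrite ler_pdivlMr ?gs_wt_gt0 // mulrC. Qed.

Lemma cabs_Dn_le n b x : cabs (Dn n b x) <= dbound mz b.
Proof. by have := Dn_le_dbound n x mz b; rewrite xpow_mzero normr1 mul1r. Qed.

Lemma Dn_partial n b j : is_partial j (Dn n b) (Dn n (mincr b j)).
Proof. by case: (phiD n). Qed.

Lemma Dn_taylor n b j x u :
  cabs (Dn n b (x + u *: unitv R j) - Dn n b x - (u%:C)%C * Dn n (mincr b j) x)
    <= 4 * dbound mz (mincr (mincr b j) j) * u ^+ 2.
Proof.
by apply: partial_taylor_le (Dn_partial _ _ _) (Dn_partial _ _ _) _ => y; exact: cabs_Dn_le.
Qed.

Lemma Dn_cvg b x : exists L, cvgC (fun n => Dn n b x) L.
Proof.
elim/mindex_ind: b x => [|b j IH] x.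
  have [L HL] := phi_cvg x; exists L => e /HL [N HN].
  by exists N => n /HN; rewrite (phiD n).1.
apply/cauchyC_cvg/(cauchyC_of_taylor (u := fun r n => Dn n b (x + r *: unitv R j))
  (K := 4 * dbound mz (mincr (mincr b j) j))).
- by rewrite mulr_ge0 ?dbound_ge0.
- by move=> r; exact: IH.
- by move=> n r; rewrite scale0r addr0; exact: Dn_taylor.
Qed.

Definition Dlim b x : C := proj1_sig (cid (Dn_cvg b x)).

Lemma Dlim_cvg b x : cvgC (fun n => Dn n b x) (Dlim b x).
Proof. exact: proj2_sig (cid (Dn_cvg b x)). Qed.

Lemma Dlim_le_dbound x a b : `|xpow x a| * cabs (Dlim b x) <= dbound a b.
Proof. exact: cvgC_le (Dlim_cvg b x) (normr_ge0 _) (fun n => Dn_le_dbound n x a b). Qed.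

Lemma cabs_Dlim_le b x : cabs (Dlim b x) <= dbound mz b.
Proof. by have := Dlim_le_dbound x mz b; rewrite xpow_mzero normr1 mul1r. Qed.

Lemma Dlim_taylor b j x u :
  cabs (Dlim b (x + u *: unitv R j) - Dlim b x - (u%:C)%C * Dlim (mincr b j) x)
    <= 4 * dbound mz (mincr (mincr b j) j) * u ^+ 2.
Proof.
have E z1 z2 z3 : 1 * (1 * z1 + -1 * z2) + - (u%:C)%C * z3 = z1 - z2 - (u%:C)%C * z3.
  by ring.
have := cvgC_le (cvgC_lin 1 (- (u%:C)%C)
  (cvgC_lin 1 (-1) (Dlim_cvg b (x + u *: unitv R j)) (Dlim_cvg b x))
  (Dlim_cvg (mincr b j) x)) ler01 (B := 4 * dbound mz (mincr (mincr b j) j) * u ^+ 2).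
by rewrite E mul1r; apply=> n /=; rewrite E mul1r; exact: Dn_taylor.
Qed.

Lemma Dlim_partial b j : is_partial j (Dlim b) (Dlim (mincr b j)).
Proof. by apply: is_partial_of_taylor (Dlim_taylor b j); rewrite mulr_ge0 ?dbound_ge0. Qed.

Lemma Dlim_derivs : is_derivs (Dlim mz) Dlim.
Proof. by split=> // b j; exact: Dlim_partial. Qed.

Lemma Dlim_continuous b : ccontinuous (Dlim b).
Proof.
apply: (@ccontinuous_of_bounded_partials _ _ _ (fun j => Dlim (mincr b j))
  (\sum_j dbound mz (mincr b j))).
- by rewrite sumr_ge0 // => j _; exact: dbound_ge0.
- exact: Dlim_partial.
- move=> j y; apply: le_trans (cabs_Dlim_le _ _) _.
  by apply: (ler_sum_term (F := fun k => dbound mz (mincr b k))) => k; exact: dbound_ge0.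
Qed.

Lemma GS_Dlim : GS s t (Dlim mz).
Proof.
split.
  exists Dlim; split; first exact: Dlim_derivs.
  split=> [|a b]; first exact: Dlim_continuous.
  by exists (dbound a b) => x; exact: Dlim_le_dbound.
exists h0, M0; split=> //; apply/pboundE; exists Dlim; split; first exact: Dlim_derivs.
move=> x a b; rewrite mulrC -ler_pdivlMr ?gs_wt_gt0 //; exact: Dlim_le_dbound.
Qed.

Lemma Dn_sub_Dlim_le n x a b :
  `|xpow x a| * cabs (Dn n b x - Dlim b x) <= 2 * dbound a b.
Proof.
apply: le_trans (_ : `|xpow x a| * (cabs (Dn n b x) + cabs (Dlim b x)) <= _).
  by rewrite ler_wpM2l // cabsB.
by rewrite mulrDr mulr2n mulrDl mul1r lerD ?Dn_le_dbound ?Dlim_le_dbound.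
Qed.

Lemma Dn_sub_Dlim_lipschitz n b x y :
  cabs ((Dn n b y - Dlim b y) - (Dn n b x - Dlim b x))
    <= 2 * (\sum_j 2 * dbound mz (mincr b j)) * \sum_j `|y 0 j - x 0 j|.
Proof.
apply: (cabs_sub_le_partials (F := fun z => Dn n b z - Dlim b z)
  (P := fun j z => Dn n (mincr b j) z - Dlim (mincr b j) z)
  (K := \sum_j 2 * dbound mz (mincr b j))).
  move=> j; have := is_partial_lin 1 (-1) (Dn_partial n b j) (Dlim_partial b j).
  by congr is_partial; apply: funext => z; rewrite mul1r mulN1r.
move=> j z; apply: le_trans (cabsB _ _) _.
apply: le_trans (_ : 2 * dbound mz (mincr b j) <= _).
  by rewrite mulr2n mulrDl mul1r lerD ?cabs_Dn_le ?cabs_Dlim_le.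
by apply: (ler_sum_term (F := fun k => 2 * dbound mz (mincr b k))) => k;
  rewrite mulr_ge0 ?dbound_ge0.
Qed.

(* On the cube [ptnorm x < Rr] pointwise convergence is uniform by equicontinuity;
   outside it, one more power of [x] gives the decay [V / Rr]. *)
Lemma Dn_sub_Dlim_unif a b e : 0 < e -> exists N, forall n, (N <= n)%N ->
  forall x, `|xpow x a| * cabs (Dn n b x - Dlim b x) <= e.
Proof.
move=> e0; pose V := \sum_k 2 * dbound (mincr a k) b.
have V0 : 0 <= V by rewrite sumr_ge0 // => k _; rewrite mulr_ge0 ?dbound_ge0.
pose Rr := V / e + 1.
have Rr1 : 1 <= Rr by rewrite lerDr divr_ge0 // ltW.
have Rr0 : 0 < Rr := lt_le_trans ltr01 Rr1.
have VRr : V / Rr <= e.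
  rewrite ler_pdivrMr // /Rr mulrDr mulr1 mulrC divfK ?gt_eqF //; lra.
have P0 : 0 < Rr ^+ mlen a by rewrite exprn_gt0.
pose Kb := \sum_j 2 * dbound mz (mincr b j).
have Kb0 : 0 <= Kb by rewrite sumr_ge0 // => j _; rewrite mulr_ge0 ?dbound_ge0.
have g0 y : cvgC (fun n => Dn n b y - Dlim b y) 0.
  by move=> e' /(Dlim_cvg b y) [N' HN']; exists N' => n /HN'; rewrite subr0.
have [N HN] := unif_cvg0_on_cube (g := fun n y => Dn n b y - Dlim b y) Rr
  (mulr_ge0 (ler0n _ 2) Kb0) (divr_gt0 e0 P0) g0 (fun n => Dn_sub_Dlim_lipschitz n b).
exists N => n Nn x; have [xR|Rx] := ltP (ptnorm x) Rr.
  apply: le_trans (_ : Rr ^+ mlen a * (e / Rr ^+ mlen a) <= _).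
    apply: ler_pM; rewrite ?cabs_ge0 ?HN //.
    by apply: normr_xpow_le => k; apply: ltW (le_lt_trans (le_ptnorm x k) xR).
  by rewrite mulrC divfK ?gt_eqF.
apply: le_trans VRr; apply: xpow_tail_le => // [|k]; first exact: cabs_ge0.
apply: le_trans (Dn_sub_Dlim_le n x (mincr a k) b) _.
by apply: (ler_sum_term (F := fun k => 2 * dbound (mincr a k) b)) => j;
  rewrite mulr_ge0 ?dbound_ge0.
Qed.

Lemma Dn_sub_Dlim_wt_half_le n x a b :
  gs_wt s t (h0 / 2) a b * (`|xpow x a| * cabs (Dn n b x - Dlim b x))
    <= 2 * M0 / 2 ^+ (mlen a + mlen b).
Proof.
have w0 := gs_wt_gt0 s t a b h0_gt0.
rewrite gs_wt_half mulrAC ler_pM2r ?invr_gt0 ?exprn_gt0 //.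
apply: le_trans (_ : gs_wt s t h0 a b * (2 * dbound a b) <= _).
  by rewrite ler_pM2l ?Dn_sub_Dlim_le.
by rewrite /dbound mulrCA [gs_wt _ _ _ _ _ * _]mulrC divfK ?gt_eqF.
Qed.

(* Only finitely many pairs [(a, b)] have [mlen a + mlen b] below a given bound;
   the others are handled uniformly by the factor [2 ^- (mlen a + mlen b)]. *)
Lemma Dn_sub_Dlim_unif_half e : 0 < e -> exists N, forall n, (N <= n)%N ->
  forall x a b, gs_wt s t (h0 / 2) a b * (`|xpow x a| * cabs (Dn n b x - Dlim b x)) <= e.
Proof.
move=> e0; have h20 : 0 < h0 / 2 by rewrite divr_gt0.
pose m0 := (Num.trunc (2 * M0 / e)).+1.
pose T := ({ffun 'I_d -> 'I_m0} * {ffun 'I_d -> 'I_m0})%type.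
pose ia (p : T) : mindex := [ffun k => nat_of_ord (p.1 k)].
pose ib (p : T) : mindex := [ffun k => nat_of_ord (p.2 k)].
have [N HN] := eventually_forall_fin (P := fun (p : T) n => forall x,
    `|xpow x (ia p)| * cabs (Dn n (ib p) x - Dlim (ib p) x)
      <= e / gs_wt s t (h0 / 2) (ia p) (ib p))
  (fun p => Dn_sub_Dlim_unif _ _ (divr_gt0 e0 (gs_wt_gt0 s t _ _ h20))).
exists N => n Nn x a b; have w0 := gs_wt_gt0 s t a b h20.
have [m0_le|lt_m0] := leqP m0 (mlen a + mlen b).
  apply: le_trans (Dn_sub_Dlim_wt_half_le n x a b) _.
  set m := (mlen a + mlen b)%N in m0_le *.
  have m2 : (m%:R : R) < 2 ^+ m by rewrite -natrX ltr_nat ltn_expl.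
  have Mm : 2 * M0 / e < m%:R by apply: lt_le_trans (truncnS_gt _) _; rewrite ler_nat.
  rewrite ler_pdivrMr ?exprn_gt0 //; move: Mm; rewrite ltr_pdivrMr // => Mm.
  by apply: ltW; apply: lt_trans Mm _; rewrite mulrC ltr_pM2l.
have ab_lt k : ((a k < m0) && (b k < m0))%N.
  by rewrite !(leq_ltn_trans _ lt_m0) // ?(leq_trans (mindex_le_mlen _ k)) ?leq_addr ?leq_addl.
pose p : T := ([ffun k => Ordinal (proj1 (andP (ab_lt k)))],
               [ffun k => Ordinal (proj2 (andP (ab_lt k)))]).
have Ea : ia p = a by apply/ffunP => k; rewrite !ffunE.
have Eb : ib p = b by apply/ffunP => k; rewrite !ffunE.
have := HN n Nn p x; rewrite Ea Eb => Hp.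
by rewrite mulrC -ler_pdivlMr.
Qed.

Lemma GS_cvg_Dlim : (forall n, GS s t (phi n)) -> GS_cvg_to s t phi (Dlim mz).
Proof.
move=> Gphi; split=> [|U [_ [_ Uball]]]; first exact: GS_Dlim.
have [e [e0 Ue]] := Uball (h0 / 2) (divr_gt0 h0_gt0 (ltr0Sn R 1)).
have [N HN] := Dn_sub_Dlim_unif_half (divr_gt0 e0 (ltr0Sn R 1)).
exists N => n Nn; apply: Ue; first exact: GS_sub (Gphi n) GS_Dlim.
exists (e / 2); split; first by rewrite ltr_pdivrMr // ltr_pMr // ltr1n.
apply/pboundE; exists (fun b x => Dn n b x - Dlim b x).
by split; [exact: is_derivs_sub (phiD n) Dlim_derivs | exact: HN].
Qed.

End LimitOfRegularSequence.

Unset Implicit Arguments.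

Theorem lemma4p2 (R : realType) (d : nat) (s t : R) (hs : 0 <= s) (ht : 0 <= t)
  (phi : nat -> 'rV[R]_d -> R[i]) (hphi : forall n, GS s t (phi n)) :
  GS_converges s t phi <-> (GS_bounded s t phi /\ pointwise_converges phi).
Proof.
split=> [[f cvf]|[bounded pointwise]].
  by split; [exact: GS_cvg_bounded hphi cvf | exact: GS_cvg_pointwise cvf].
have [Dn phiD] := choice (fun n => GS_derivs (hphi n)).
have [h0 [M0 [h0_gt0 DnM0]]] := GS_bounded_regular phiD bounded.
exists (Dlim phiD h0_gt0 DnM0 pointwise (mzero d)).
exact: GS_cvg_Dlim hphi.
Qed.
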